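(* In the social learning model, assume there exist $c>0$, $k>0$ and $x_0>0$ such that $G_-(-x)=c\,x^{-k}$ and $G_+(x)=1-c\,x^{-k}$ for all $x>x_0$. Then there exists $\kappa>0$ such that for all $t\ge1$, $$\mathbb{P}_+(a_t=-1)<\kappa\,t^{-2.1}.$$
   Context: Social learning model. A state $\theta\in\{-1,+1\}$ is drawn with $\mathbb{P}(\theta=+1)=\mathbb{P}(\theta=-1)=1/2$. Agents $t=1,2,\dots$ receive private signals $s_t\in\mathbb{R}$ that are i.i.d. conditionally on $\theta$, with CDF $F_+$ if $\theta=+1$ and $F_-$ if $\theta=-1$; $F_+$ and $F_-$ are mutually absolutely continuous. Let $L_t=\log\frac{\mathbb{P}(\theta=+1\mid s_t)}{\mathbb{P}(\theta=-1\mid s_t)}$ be the private log-likelihood ratio, and let $G_+$, $G_-$ denote the CDFs of $L_t$ conditional on $\theta=+1$, $\theta=-1$ respectively. Signals are assumed unbounded: for every $M\in\mathbb{R}$, $\mathbb{P}(L_t>M)>0$ and $\mathbb{P}(L_t<-M)>0$. Agent $t$ observes $a_1,\dots,a_{t-1}$ and her own signal and chooses $a_t\in\{-1,+1\}$ (utility $1$ if $a_t=\theta$, else $0$). The public belief is $\mu_t=\mathbb{P}(\theta=+1\mid a_1,\dots,a_{t-1})$ and $\ell_t=\log\frac{\mu_t}{1-\mu_t}$ (so $\ell_1=0$). In equilibrium $a_t=+1$ iff $\ell_t+L_t>0$, and otherwise $a_t=-1$. Consequently $\ell_{t+1}=\ell_t+D_+(\ell_t)$ if $a_t=+1$ and $\ell_{t+1}=\ell_t+D_-(\ell_t)$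 if $a_t=-1$, where $D_+(x)=\log\frac{1-G_+(-x)}{1-G_-(-x)}$ and $D_-(x)=\log\frac{G_+(-x)}{G_-(-x)}$. We write $\mathbb{P}_+(\cdot)=\mathbb{P}(\cdot\mid\theta=+1)$ and $\mathbb{E}_+$ for the corresponding expectation. *)

From Stdlib Require Import Reals.
Open Scope R_scope.

Definition is_cdf (G : R -> R) : Prop :=
  (forall x y, x <= y -> G x <= G y) /\
  (forall x eps, 0 < eps -> exists delta, 0 < delta /\
      forall y, x <= y < x + delta -> G y - G x < eps) /\
  (forall eps, 0 < eps -> exists M, forall x, x <= - M -> G x < eps) /\
  (forall eps, 0 < eps -> exists M, forall x, M <= x -> 1 - eps < G x).

(* (Gp, Gm) are the conditional CDFs of a log-likelihood ratio L:
   the law of L under theta=+1 has density e^l w.r.t. its law under theta=-1,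
   i.e. for every interval (a,b]:
     e^a * P_-(a<L<=b) <= P_+(a<L<=b) <= e^b * P_-(a<L<=b). *)
Definition llr_pair (Gp Gm : R -> R) : Prop :=
  is_cdf Gp /\ is_cdf Gm /\
  (forall a b, a < b ->
     exp a * (Gm b - Gm a) <= Gp b - Gp a /\
     Gp b - Gp a <= exp b * (Gm b - Gm a)).

(* Unbounded signals: for every M, P(L > M) > 0 and P(L < -M) > 0,
   where P = (P_+ + P_-)/2 (prior 1/2). *)
Definition unbounded_signals (Gp Gm : R -> R) : Prop :=
  forall M, (Gp M + Gm M) / 2 < 1 /\
            exists y, y < - M /\ 0 < (Gp y + Gm y) / 2.

Definition Dplus (Gp Gm : R -> R) (x : R) : R :=
  ln ((1 - Gp (- x)) / (1 - Gm (- x))).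
Definition Dminus (Gp Gm : R -> R) (x : R) : R :=
  ln (Gp (- x) / Gm (- x)).

(* prob_minus_from Gp Gm n l = P_+(the agent n steps later takes action -1
   | current public log-likelihood ratio is l).
   Agent with public llr l plays +1 with P_+-probability 1 - Gp(-l)
   (event l + L > 0) and -1 with probability Gp(-l) (event L <= -l). *)
Fixpoint prob_minus_from (Gp Gm : R -> R) (n : nat) (l : R) : R :=
  match n with
  | O => Gp (- l)
  | S m => (1 - Gp (- l)) * prob_minus_from Gp Gm m (l + Dplus Gp Gm l)
           + Gp (- l) * prob_minus_from Gp Gm m (l + Dminus Gp Gm l)
  end.

(* P_+(a_t = -1), agents indexed from t = 1, with l_1 = 0. *)
Definition prob_wrong (Gp Gm : R -> R) (t : nat) : R :=
  prob_minus_from Gp Gm (t - 1) 0.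

From Pilot Require Import Defs.
From Stdlib Require Import Reals Lra Lia Psatz.
Open Scope R_scope.

(* Under [theta = +1] consider the weight [W(l) = exp (mu |l| - l / 2)] of the public
   log-likelihood ratio [l].  In expectation one step multiplies [W] by at most
   [1 - 3 / (A exp (mu |l| / 3))]: near [l = 0] because the two states induce action
   distributions at positive Hellinger distance, and in the tails because the less likely
   action moves [l] by more than [|l|] and has probability [c |l|^(-k)] under the state it
   favours, which dominates [exp (- mu |l| / 3)].  Induction on the horizon turns this drift into
   [P_+(a_t = -1) <= (A / t)^3], using [exp (- l / 2)] (a supermartingale) once the cube is
   too large to help.  The bound [t^(-3)] is stronger than the claimed [t^(-2.1)]. *)

Lemma exp_le_compat x y : x <= y -> exp x <= exp y.
Proof. intros [Hlt | ->]; [left; apply exp_increasing; exact Hlt | lra]. Qed.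

Lemma ln_le_compat x y : 0 < x -> x <= y -> ln x <= ln y.
Proof. intros Hx [Hlt | ->]; [left; apply ln_increasing; assumption | lra]. Qed.

Lemma ln_le_sub_1 x : 0 < x -> ln x <= x - 1.
Proof. intros Hx. pose proof (exp_ineq1_le (ln x)) as H. rewrite exp_ln in H; lra. Qed.

Lemma ln_nonpos x : 0 < x -> x <= 1 -> ln x <= 0.
Proof. intros Hx Hx1. rewrite <- ln_1. apply ln_le_compat; lra. Qed.

Lemma ln_div x y : 0 < x -> 0 < y -> ln (x / y) = ln x - ln y.
Proof.
  intros Hx Hy. unfold Rdiv.
  rewrite ln_mult, ln_Rinv; [ring | assumption | assumption | apply Rinv_0_lt_compat; assumption].
Qed.

Lemma exp_opp_mul x : exp x * exp (- x) = 1.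
Proof. rewrite <- exp_plus, Rplus_opp_r. apply exp_0. Qed.

Lemma exp_half_ln_sqr x : 0 < x -> exp (ln x / 2) * exp (ln x / 2) = x.
Proof.
  intros Hx. rewrite <- exp_plus. replace (ln x / 2 + ln x / 2) with (ln x) by field.
  apply exp_ln, Hx.
Qed.

(* With [w = exp (x / 4)] this is [(w - 1)^2 (w^2 + 2 w + 3) >= 0]. *)
Lemma exp_quarter_le x : x <= 0 -> exp (x / 4) <= 1 - (1 - exp x) / 4.
Proof.
  intros Hx. set (w := exp (x / 4)).
  assert (Hw4 : exp x = w * w * w * w) by (unfold w; rewrite <- !exp_plus; f_equal; field).
  assert (Hw0 : 0 < w) by apply exp_pos.
  assert (Hw1 : w <= 1) by (unfold w; rewrite <- exp_0; apply exp_le_compat; lra).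
  rewrite Hw4. assert (0 <= (w - 1) * (w - 1) * (w * w + 2 * w + 3)) by (apply Rmult_le_pos; nra).
  nra.
Qed.

Lemma exp_le_1_add_2x x : 0 <= x <= 1 / 2 -> exp x <= 1 + 2 * x.
Proof.
  intros Hx. pose proof (exp_ineq1_le (- x)) as Hlin. pose proof (exp_opp_mul x).
  pose proof (exp_pos x). pose proof (exp_pos (- x)). nra.
Qed.

Lemma exp_opp_3_le : exp (-3) <= / 8.
Proof.
  pose proof (exp_ineq1_le 1) as H1.
  assert (H3 : exp 3 = exp 1 * exp 1 * exp 1) by (rewrite <- !exp_plus; f_equal; ring).
  assert (8 <= exp 3) by (rewrite H3; nra).
  replace (-3) with (- (3)) by ring. rewrite exp_Ropp. apply Rinv_le_contravar; lra.
Qed.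

(* [l^(-k) e^(nu l)] is minimal at [l = k / nu], where it is [(e nu / k)^k >= (nu / k)^k]. *)
Lemma exp_le_Rpower_mul_exp k nu l : 0 < k -> 0 < nu -> 0 < l ->
  exp (k * ln (nu / k)) <= Rpower l (- k) * exp (nu * l).
Proof.
  intros Hk Hnu Hl. unfold Rpower. rewrite <- exp_plus. apply exp_le_compat.
  assert (Hr : 0 < nu * l / k) by (apply Rdiv_lt_0_compat; nra).
  pose proof (ln_le_sub_1 _ Hr) as Hln.
  rewrite ln_div, ln_mult in Hln by nra. rewrite ln_div by lra.
  assert (k * (ln nu + ln l - ln k) <= k * (nu * l / k - 1)) by (apply Rmult_le_compat_l; lra).
  replace (k * (nu * l / k - 1)) with (nu * l - k) in H by (field; lra).
  nra.
Qed.

(* Bounds the expected one-step factor of [weight mu] under [theta = +1] when the agent plays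
   [-1] with probability [p] under [theta = +1] and [m] under [theta = -1] ([weight_step]);
   the summands come from the actions [+1] and [-1]. *)
Definition drift (mu p m : R) : R :=
  exp ((ln (1 - p) + ln (1 - m)) / 2 + mu * ln ((1 - p) / (1 - m)))
  + exp ((ln p + ln m) / 2 + mu * ln (m / p)).

Lemma drift_sym mu p m : drift mu p m = drift mu (1 - m) (1 - p).
Proof.
  unfold drift. replace (1 - (1 - m)) with m by ring. replace (1 - (1 - p)) with p by ring.
  rewrite Rplus_comm, (Rplus_comm (ln p)), (Rplus_comm (ln (1 - p))). reflexivity.
Qed.

(* The left-hand side is the Hellinger affinity of Bernoulli(p) and Bernoulli(m). *)
Lemma hellinger_le p m : 0 < p < 1 -> 0 < m < 1 ->
  exp ((ln (1 - p) + ln (1 - m)) / 2) + exp ((ln p + ln m) / 2) <= 1 - (m - p) ^ 2 / 8.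
Proof.
  intros Hp Hm.
  replace ((ln (1 - p) + ln (1 - m)) / 2) with (ln (1 - p) / 2 + ln (1 - m) / 2) by field.
  replace ((ln p + ln m) / 2) with (ln p / 2 + ln m / 2) by field.
  rewrite !exp_plus.
  set (u := exp (ln (1 - p) / 2)). set (v := exp (ln (1 - m) / 2)).
  set (s := exp (ln p / 2)). set (w := exp (ln m / 2)).
  assert (Hu : u * u = 1 - p) by (apply exp_half_ln_sqr; lra).
  assert (Hv : v * v = 1 - m) by (apply exp_half_ln_sqr; lra).
  assert (Hs : s * s = p) by (apply exp_half_ln_sqr; lra).
  assert (Hw : w * w = m) by (apply exp_half_ln_sqr; lra).
  assert (0 < u) by apply exp_pos. assert (0 < v) by apply exp_pos.
  assert (0 < s) by apply exp_pos. assert (0 < w) by apply exp_pos.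
  assert (s <= 1) by nra. assert (w <= 1) by nra.
  rewrite <- Hs, <- Hw.
  assert (Hsq : (w * w - s * s) ^ 2 <= 4 * (w - s) ^ 2).
  { replace ((w * w - s * s) ^ 2) with ((w - s) ^ 2 * (w + s) ^ 2) by ring.
    assert ((w + s) ^ 2 <= 2 ^ 2) by (apply pow_incr; lra).
    rewrite Rmult_comm. apply Rmult_le_compat_r; [apply pow2_ge_0 | lra]. }
  assert (2 - 2 * (u * v + s * w) = (u - v) ^ 2 + (s - w) ^ 2) by nra.
  pose proof (pow2_ge_0 (u - v)). lra.
Qed.

Lemma drift_0_le_1 p m : 0 < p < 1 -> 0 < m < 1 -> drift 0 p m <= 1.
Proof.
  intros Hp Hm. unfold drift. rewrite !Rmult_0_l, !Rplus_0_r.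
  pose proof (hellinger_le p m Hp Hm). pose proof (pow2_ge_0 (m - p)). lra.
Qed.

(* [12 <= L] makes [e^(-L/4) <= 1/8]. *)
Lemma drift_le_of_ln_ratio mu p m L : 0 <= mu <= / 4 -> 0 < p < 1 -> 0 < m < 1 ->
  12 <= L -> ln (p / m) <= - L -> drift mu p m <= 1 - m / 8.
Proof.
  intros Hmu Hp Hm HL Hratio. unfold drift.
  rewrite ln_div in Hratio by lra. rewrite !ln_div by lra.
  assert (ha : ln (1 - p) <= 0) by (apply ln_nonpos; lra).
  assert (hb : ln (1 - m) <= 0) by (apply ln_nonpos; lra).
  assert (he : ln m <= 0) by (apply ln_nonpos; lra).
  assert (Hplus : exp ((ln (1 - p) + ln (1 - m)) / 2 + mu * (ln (1 - p) - ln (1 - m)))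
                  <= 1 - m / 4).
  { pose proof (exp_quarter_le _ hb) as Hq. rewrite exp_ln in Hq by lra.
    apply Rle_trans with (exp (ln (1 - m) / 4)); [apply exp_le_compat; nra | lra]. }
  assert (Hminus : exp ((ln p + ln m) / 2 + mu * (ln m - ln p)) <= m / 8).
  { assert (exp (- L / 4) <= exp (-3)) by (apply exp_le_compat; lra).
    pose proof exp_opp_3_le.
    apply Rle_trans with (exp (ln m) * exp (- L / 4)).
    - rewrite <- exp_plus. apply exp_le_compat. nra.
    - rewrite exp_ln by lra. nra. }
  lra.
Qed.

Lemma drift_le_of_gap mu p m g B : 0 <= mu -> 0 < p < 1 -> 0 < m < 1 ->
  0 <= g <= m - p -> - ln (1 - m) <= B -> - ln p <= B -> mu * B <= g ^ 2 / 32 ->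
  drift mu p m <= 1 - g ^ 2 / 16.
Proof.
  intros Hmu Hp Hm Hg HBm HBp HmuB. unfold drift. rewrite !ln_div by lra.
  assert (ha : ln (1 - p) <= 0) by (apply ln_nonpos; lra).
  assert (hc : ln p <= 0) by (apply ln_nonpos; lra).
  assert (he : ln m <= 0) by (apply ln_nonpos; lra).
  assert (HB : 0 <= B) by lra.
  set (H1 := exp ((ln (1 - p) + ln (1 - m)) / 2)).
  set (H2 := exp ((ln p + ln m) / 2)).
  assert (Hplus : exp ((ln (1 - p) + ln (1 - m)) / 2 + mu * (ln (1 - p) - ln (1 - m)))
                  <= H1 * exp (mu * B))
    by (unfold H1; rewrite <- exp_plus; apply exp_le_compat; nra).
  assert (Hminus : exp ((ln p + ln m) / 2 + mu * (ln m - ln p)) <= H2 * exp (mu * B))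
    by (unfold H2; rewrite <- exp_plus; apply exp_le_compat; nra).
  pose proof (hellinger_le p m Hp Hm) as Hhel. fold H1 H2 in Hhel.
  assert (Hg2 : g ^ 2 <= (m - p) ^ 2) by (apply pow_incr; lra).
  assert (Hg1 : g ^ 2 <= 1 ^ 2) by (apply pow_incr; lra).
  rewrite pow1 in Hg1.
  pose proof (exp_le_1_add_2x (mu * B) ltac:(split; nra)) as Hexp.
  assert (0 < H1) by apply exp_pos. assert (0 < H2) by apply exp_pos.
  assert ((H1 + H2) * exp (mu * B) <= (1 - g ^ 2 / 8) * (1 + 2 * (mu * B)))
    by (apply Rmult_le_compat; [lra | left; apply exp_pos | lra | exact Hexp]).
  nra.
Qed.

Definition weight (mu l : R) : R := exp (mu * Rabs l - l / 2).

Lemma weight_0 l : weight 0 l = exp (- l / 2).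
Proof. unfold weight. f_equal. field. Qed.

Lemma weight_at_0 mu : weight mu 0 = 1.
Proof. unfold weight. rewrite Rabs_R0, <- exp_0. f_equal. field. Qed.

Lemma weight_cube nu A N l :
  (A / N) ^ 3 * weight (3 * nu) l = (A * exp (nu * Rabs l) / N) ^ 3 * exp (- l / 2).
Proof.
  unfold weight. replace (3 * nu * Rabs l - l / 2) with
    (nu * Rabs l + nu * Rabs l + nu * Rabs l + - l / 2) by field.
  rewrite !exp_plus. unfold Rdiv. ring.
Qed.

(* After action [+1] (resp. [-1]) the public llr moves by [ln ((1 - p) / (1 - m)) >= 0]
   (resp. [ln (p / m) <= 0]); [(1 - p) e^(-jump / 2)] is then a geometric mean, which is
   where the square roots hidden in [drift] come from. *)
Lemma weight_step mu p m l : 0 <= mu -> 0 < p -> p <= m -> m < 1 ->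
  (1 - p) * weight mu (l + ln ((1 - p) / (1 - m))) + p * weight mu (l + ln (p / m))
  <= weight mu l * drift mu p m.
Proof.
  intros Hmu Hp Hpm Hm. unfold weight, drift. rewrite Rmult_plus_distr_l, !ln_div by lra.
  assert (Hplus : ln (1 - m) <= ln (1 - p)) by (apply ln_le_compat; lra).
  assert (Hminus : ln p <= ln m) by (apply ln_le_compat; lra).
  pose proof (Rabs_triang l (ln (1 - p) - ln (1 - m))) as T1.
  rewrite (Rabs_right (ln (1 - p) - ln (1 - m))) in T1 by lra.
  pose proof (Rabs_triang l (ln p - ln m)) as T2.
  rewrite (Rabs_left1 (ln p - ln m)) in T2 by lra.
  apply Rplus_le_compat.
  - rewrite <- (exp_ln (1 - p)) at 1 by lra. rewrite <- !exp_plus. apply exp_le_compat; nra.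
  - rewrite <- (exp_ln p) at 1 by lra. rewrite <- !exp_plus. apply exp_le_compat; nra.
Qed.

Lemma cube_decay A N X : 0 <= A -> 1 <= N -> 0 < X <= N + 1 ->
  (A / N) ^ 3 * (1 - 3 / X) <= (A / (N + 1)) ^ 3.
Proof.
  intros HA HN HX.
  assert (H3 : 1 - 3 / X <= 1 - 3 / (N + 1)).
  { assert (/ (N + 1) <= / X) by (apply Rinv_le_contravar; lra).
    unfold Rdiv. lra. }
  assert (HN3 : 1 - 3 / (N + 1) <= N ^ 3 / (N + 1) ^ 3).
  { apply (Rmult_le_reg_r ((N + 1) ^ 3)); [apply pow_lt; lra |].
    field_simplify; [nra | lra | lra]. }
  assert (0 <= (A / N) ^ 3)
    by (apply pow_le; unfold Rdiv; apply Rmult_le_pos; [lra | left; apply Rinv_0_lt_compat; lra]).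
  apply Rle_trans with ((A / N) ^ 3 * (N ^ 3 / (N + 1) ^ 3)).
  - apply Rmult_le_compat_l; lra.
  - right. field. lra.
Qed.

Lemma nonneg_of_sum_pos (F G : R -> R) :
  (forall x y, x <= y -> F x <= F y) ->
  (forall eps, 0 < eps -> exists M, forall x, x <= - M -> G x < eps) ->
  (forall M, exists y, y < - M /\ 0 < F y + G y) ->
  forall x, 0 <= F x.
Proof.
  intros Fmono Glim Hpos x. apply Rnot_lt_le. intros Hneg.
  destruct (Glim (- F x)) as [M HM]; [lra|].
  destruct (Hpos (Rmax M (- x))) as [y [Hy Hsum]].
  pose proof (Rmax_l M (- x)). pose proof (Rmax_r M (- x)).
  pose proof (HM y ltac:(lra)). pose proof (Fmono y x ltac:(lra)). lra.
Qed.

Lemma le_1_of_sum_lt_2 (F G : R -> R) :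
  (forall x y, x <= y -> F x <= F y) ->
  (forall eps, 0 < eps -> exists M, forall x, M <= x -> 1 - eps < G x) ->
  (forall M, F M + G M < 2) ->
  forall x, F x <= 1.
Proof.
  intros Fmono Glim Hsum x. apply Rnot_lt_le. intros Hgt.
  destruct (Glim (F x - 1)) as [M HM]; [lra|].
  pose proof (HM (Rmax M x) (Rmax_l M x)). pose proof (Fmono x (Rmax M x) (Rmax_r M x)).
  pose proof (Hsum (Rmax M x)). lra.
Qed.

Section Signal_cdfs.

Variables Gp Gm : R -> R.
Hypothesis Hllr : llr_pair Gp Gm.
Hypothesis Hunb : unbounded_signals Gp Gm.

Lemma Gp_mono x y : x <= y -> Gp x <= Gp y.
Proof. destruct Hllr as [[Hmono _] _]. apply Hmono. Qed.

Lemma Gm_mono x y : x <= y -> Gm x <= Gm y.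
Proof. destruct Hllr as [_ [[Hmono _] _]]. apply Hmono. Qed.

Lemma Gp_sub_ge a b : a < b -> exp a * (Gm b - Gm a) <= Gp b - Gp a.
Proof. destruct Hllr as [_ [_ Hdens]]. intros Hab. apply (Hdens a b Hab). Qed.

Lemma Gp_sub_le a b : a < b -> Gp b - Gp a <= exp b * (Gm b - Gm a).
Proof. destruct Hllr as [_ [_ Hdens]]. intros Hab. apply (Hdens a b Hab). Qed.

Lemma Gp_nonneg x : 0 <= Gp x.
Proof.
  destruct Hllr as [_ [[_ [_ [Hlim _]]] _]].
  apply (nonneg_of_sum_pos Gp Gm Gp_mono Hlim).
  intros M. destruct (Hunb M) as [_ [y Hy]]. exists y. lra.
Qed.

Lemma Gm_nonneg x : 0 <= Gm x.
Proof.
  destruct Hllr as [[_ [_ [Hlim _]]] _].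
  apply (nonneg_of_sum_pos Gm Gp Gm_mono Hlim).
  intros M. destruct (Hunb M) as [_ [y Hy]]. exists y. lra.
Qed.

Lemma Gp_le_1 x : Gp x <= 1.
Proof.
  destruct Hllr as [_ [[_ [_ [_ Hlim]]] _]].
  apply (le_1_of_sum_lt_2 Gp Gm Gp_mono Hlim).
  intros M. destruct (Hunb M) as [HM _]. lra.
Qed.

Lemma Gm_le_1 x : Gm x <= 1.
Proof.
  destruct Hllr as [[_ [_ [_ Hlim]]] _].
  apply (le_1_of_sum_lt_2 Gm Gp Gm_mono Hlim).
  intros M. destruct (Hunb M) as [HM _]. lra.
Qed.

Lemma Gp_le_exp_Gm b : Gp b <= exp b * Gm b.
Proof.
  apply Rnot_lt_le. intros Hgt.
  destruct Hllr as [[_ [_ [Hlim _]]] _].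
  destruct (Hlim (Gp b - exp b * Gm b)) as [M HM]; [lra|].
  set (a := Rmin (b - 1) (- M)).
  assert (Hab : a < b) by (unfold a; pose proof (Rmin_l (b - 1) (- M)); lra).
  pose proof (Gp_sub_le a b Hab). pose proof (HM a (Rmin_r _ _)).
  pose proof (Gm_nonneg a). pose proof (exp_pos b). nra.
Qed.

Lemma one_sub_Gm_le y : 1 - Gm y <= exp (- y) * (1 - Gp y).
Proof.
  apply Rnot_lt_le. intros Hgt.
  destruct Hllr as [_ [[_ [_ [_ Hlim]]] _]].
  destruct (Hlim (1 - Gm y - exp (- y) * (1 - Gp y))) as [M HM]; [lra|].
  set (b := Rmax (y + 1) M).
  assert (Hyb : y < b) by (unfold b; pose proof (Rmax_l (y + 1) M); lra).
  pose proof (Gp_sub_ge y b Hyb). pose proof (HM b (Rmax_r _ _)). pose proof (Gp_le_1 b).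
  assert (Hlt : exp y * (exp (- y) * (1 - Gp y)) < exp y * (Gm b - Gm y))
    by (apply Rmult_lt_compat_l; [apply exp_pos | lra]).
  rewrite <- Rmult_assoc, exp_opp_mul, Rmult_1_l in Hlt. lra.
Qed.

Lemma Gm_pos x : 0 < Gm x.
Proof.
  destruct (Hunb (- x)) as [_ [y [Hyx Hsum]]].
  pose proof (Gp_le_exp_Gm y). pose proof (Gm_nonneg y). pose proof (exp_pos y).
  pose proof (Gm_mono y x ltac:(lra)). nra.
Qed.

Lemma Gp_lt_1 x : Gp x < 1.
Proof.
  destruct (Hunb x) as [Hsum _].
  pose proof (one_sub_Gm_le x). pose proof (Gm_le_1 x). pose proof (exp_pos (- x)). nra.
Qed.

Lemma Gp_pos x : 0 < Gp x.
Proof.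
  destruct Hllr as [_ [[_ [_ [Hlim _]]] _]].
  destruct (Hlim (Gm x)) as [M HM]; [apply Gm_pos|].
  set (a := Rmin (x - 1) (- M)).
  assert (Hax : a < x) by (unfold a; pose proof (Rmin_l (x - 1) (- M)); lra).
  pose proof (Gp_sub_ge a x Hax). pose proof (HM a (Rmin_r _ _)).
  pose proof (Gp_nonneg a). pose proof (exp_pos a). nra.
Qed.

Lemma Gm_lt_1 x : Gm x < 1.
Proof.
  destruct Hllr as [[_ [_ [_ Hlim]]] _].
  destruct (Hlim (1 - Gp x)) as [M HM]; [pose proof (Gp_lt_1 x); lra|].
  set (b := Rmax (x + 1) M).
  assert (Hxb : x < b) by (unfold b; pose proof (Rmax_l (x + 1) M); lra).
  pose proof (Gp_sub_le x b Hxb). pose proof (HM b (Rmax_r _ _)).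
  pose proof (Gm_le_1 b). pose proof (exp_pos b). nra.
Qed.

Lemma Gp_le_Gm x : Gp x <= Gm x.
Proof.
  destruct (Rle_dec x 0) as [Hx | Hx].
  - assert (exp x <= 1) by (rewrite <- exp_0; apply exp_le_compat; lra).
    pose proof (Gp_le_exp_Gm x). pose proof (Gm_nonneg x). nra.
  - assert (exp (- x) <= 1) by (rewrite <- exp_0; apply exp_le_compat; lra).
    pose proof (one_sub_Gm_le x). pose proof (Gp_le_1 x). nra.
Qed.

Lemma Gm_sub_Gp_ge_left x : x <= 0 -> (1 - exp (-1)) * Gm (x - 1) <= Gm x - Gp x.
Proof.
  intros Hx.
  pose proof (Gp_sub_le (x - 1) x ltac:(lra)). pose proof (Gp_le_exp_Gm (x - 1)).
  pose proof (Gm_mono (x - 1) x ltac:(lra)). pose proof (Gm_nonneg (x - 1)).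
  assert (Hsplit : exp (x - 1) = exp x * exp (-1)) by (rewrite <- exp_plus; f_equal; ring).
  assert (exp x <= 1) by (rewrite <- exp_0; apply exp_le_compat; lra).
  assert (exp (-1) < 1) by (rewrite <- exp_0; apply exp_increasing; lra).
  pose proof (exp_pos (-1)).
  set (D := Gm x - (1 - exp (-1)) * Gm (x - 1)).
  assert (HD : 0 <= D) by (unfold D; nra).
  assert (Gp x <= exp x * D) by (unfold D; rewrite Hsplit in *; nra).
  assert (exp x * D <= 1 * D) by (apply Rmult_le_compat_r; lra).
  unfold D in *. lra.
Qed.

Lemma Gm_sub_Gp_ge_right x : 0 <= x -> (1 - exp (-1)) * (1 - Gp (x + 1)) <= Gm x - Gp x.
Proof.
  intros Hx.
  pose proof (Gp_sub_ge x (x + 1) ltac:(lra)) as Hinc. pose proof (one_sub_Gm_le (x + 1)) as Htop.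
  pose proof (Gp_mono x (x + 1) ltac:(lra)). pose proof (Gp_le_1 (x + 1)).
  assert (Hsplit : exp (- (x + 1)) = exp (- x) * exp (-1)) by (rewrite <- exp_plus; f_equal; ring).
  rewrite Hsplit in Htop.
  assert (exp (- x) <= 1) by (rewrite <- exp_0; apply exp_le_compat; lra).
  pose proof (exp_pos (-1)).
  assert (Hinc' : Gm (x + 1) - Gm x <= exp (- x) * (Gp (x + 1) - Gp x)).
  { apply (Rmult_le_compat_l (exp (- x))) in Hinc; [| left; apply exp_pos].
    rewrite <- Rmult_assoc, (Rmult_comm (exp (- x))), exp_opp_mul, Rmult_1_l in Hinc. exact Hinc. }
  assert (0 <= (1 - exp (- x)) * (Gp (x + 1) - Gp x)) by (apply Rmult_le_pos; lra).
  assert (0 <= (1 - exp (- x)) * (exp (-1) * (1 - Gp (x + 1))))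
    by (apply Rmult_le_pos; [lra | apply Rmult_le_pos; lra]).
  lra.
Qed.

Lemma prob_minus_from_succ_le mu K n l : 0 <= mu -> 0 <= K ->
  (forall l', prob_minus_from Gp Gm n l' <= K * weight mu l') ->
  prob_minus_from Gp Gm (S n) l <= K * (weight mu l * drift mu (Gp (- l)) (Gm (- l))).
Proof.
  intros Hmu HK IH. simpl. unfold Defs.Dplus, Defs.Dminus.
  pose proof (Gp_pos (- l)). pose proof (Gp_lt_1 (- l)).
  pose proof (IH (l + ln ((1 - Gp (- l)) / (1 - Gm (- l))))).
  pose proof (IH (l + ln (Gp (- l) / Gm (- l)))).
  pose proof (weight_step mu (Gp (- l)) (Gm (- l)) l Hmu
                (Gp_pos (- l)) (Gp_le_Gm (- l)) (Gm_lt_1 (- l))).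
  apply Rle_trans with (K * ((1 - Gp (- l)) * weight mu (l + ln ((1 - Gp (- l)) / (1 - Gm (- l))))
                             + Gp (- l) * weight mu (l + ln (Gp (- l) / Gm (- l))))).
  - rewrite Rmult_plus_distr_l. apply Rplus_le_compat; nra.
  - apply Rmult_le_compat_l; assumption.
Qed.

Lemma Gp_opp_le_exp_half l : Gp (- l) <= exp (- l / 2).
Proof.
  destruct (Rle_dec 0 l) as [Hl | Hl].
  - pose proof (Gp_le_exp_Gm (- l)). pose proof (Gm_le_1 (- l)). pose proof (Gm_nonneg (- l)).
    assert (exp (- l) <= exp (- l / 2)) by (apply exp_le_compat; lra).
    pose proof (exp_pos (- l)). nra.
  - assert (1 <= exp (- l / 2)) by (rewrite <- exp_0; apply exp_le_compat; lra).
    pose proof (Gp_le_1 (- l)). lra.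
Qed.

(* [exp (- l / 2)] is the square root of the likelihood ratio [dP_- / dP_+] of the public
   history, hence a supermartingale under [theta = +1]. *)
Lemma prob_minus_from_le_exp n l : prob_minus_from Gp Gm n l <= exp (- l / 2).
Proof.
  revert l. induction n as [| n IH]; intro l.
  - apply Gp_opp_le_exp_half.
  - rewrite <- weight_0.
    apply Rle_trans with (1 * (weight 0 l * drift 0 (Gp (- l)) (Gm (- l)))).
    + apply prob_minus_from_succ_le; [lra | lra |]. intro l'. rewrite weight_0, Rmult_1_l. apply IH.
    + rewrite Rmult_1_l. rewrite <- (Rmult_1_r (weight 0 l)) at 2.
      apply Rmult_le_compat_l; [left; apply exp_pos |].
      apply drift_0_le_1; split; auto using Gp_pos, Gp_lt_1, Gm_pos, Gm_lt_1.
Qed.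

Lemma prob_minus_from_le_cube_of_le nu A N n l : 0 < N <= A * exp (nu * Rabs l) ->
  prob_minus_from Gp Gm n l <= (A / N) ^ 3 * weight (3 * nu) l.
Proof.
  intros HN. rewrite weight_cube.
  assert (1 <= (A * exp (nu * Rabs l) / N) ^ 3).
  { apply pow_R1_Rle. apply (Rmult_le_reg_r N); [lra |]. field_simplify; lra. }
  pose proof (prob_minus_from_le_exp n l). pose proof (exp_pos (- l / 2)). nra.
Qed.

(* With [X = A exp (nu |l|)], one step multiplies the weight by at most [1 - 3 / X], which
   matches the decay of [N^(-3)] while [X <= N + 1]; for larger [X] the claimed bound exceeds
   [exp (- l / 2)]. *)
Lemma prob_minus_from_le_cube nu A :
  0 < nu -> 1 <= A ->
  (forall l, drift (3 * nu) (Gp (- l)) (Gm (- l)) <= 1 - 3 / (A * exp (nu * Rabs l))) ->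
  forall n l, prob_minus_from Gp Gm n l <= (A / INR (S n)) ^ 3 * weight (3 * nu) l.
Proof.
  intros Hnu HA Hdrift.
  assert (HX : forall l, 1 <= A * exp (nu * Rabs l)).
  { intro l. assert (1 <= exp (nu * Rabs l))
      by (rewrite <- exp_0; apply exp_le_compat; pose proof (Rabs_pos l); nra).
    nra. }
  intro n. induction n as [| n IH]; intro l; pose proof (HX l) as HXl.
  - apply prob_minus_from_le_cube_of_le. simpl. lra.
  - rewrite S_INR. set (N := INR (S n)).
    assert (HN : 1 <= N) by (unfold N; rewrite S_INR; pose proof (pos_INR n); lra).
    set (X := A * exp (nu * Rabs l)) in *.
    destruct (Rle_dec (N + 1) X) as [Hbig | Hsmall];
      [apply prob_minus_from_le_cube_of_le; fold X; lra |].
    assert (HA0 : 0 <= (A / N) ^ 3)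
      by (apply pow_le; unfold Rdiv; apply Rmult_le_pos; [lra | left; apply Rinv_0_lt_compat; lra]).
    apply Rle_trans with ((A / N) ^ 3 * (weight (3 * nu) l * drift (3 * nu) (Gp (- l)) (Gm (- l)))).
    + apply prob_minus_from_succ_le; [lra | exact HA0 | exact IH].
    + pose proof (Hdrift l) as Hd. fold X in Hd.
      pose proof (cube_decay A N X ltac:(lra) HN ltac:(lra)).
      assert (Hw : 0 < weight (3 * nu) l) by apply exp_pos.
      apply Rle_trans with ((A / N) ^ 3 * (1 - 3 / X) * weight (3 * nu) l).
      * rewrite Rmult_assoc, (Rmult_comm (1 - 3 / X)).
        apply Rmult_le_compat_l; [exact HA0 |]. apply Rmult_le_compat_l; lra.
      * apply Rmult_le_compat_r; lra.
Qed.

End Signal_cdfs.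

Lemma three_div_le_Rpower_tail c k nu A l : 0 < c -> 0 < k -> 0 < nu -> 0 < l ->
  24 / (c * exp (k * ln (nu / k))) <= A ->
  3 / (A * exp (nu * l)) <= c * Rpower l (- k) / 8.
Proof.
  intros Hc Hk Hnu Hl HA.
  set (E := exp (k * ln (nu / k))).
  assert (HE : 0 < E) by apply exp_pos.
  assert (HAcE : 24 <= A * (c * E)).
  { fold E in HA. apply (Rmult_le_compat_r (c * E)) in HA; [| nra].
    replace (24 / (c * E) * (c * E)) with 24 in HA by (field; lra). exact HA. }
  pose proof (exp_le_Rpower_mul_exp k nu l Hk Hnu Hl) as Hmin. fold E in Hmin.
  assert (HcE : 0 < c * E) by nra.
  assert (HA0 : 0 < A) by nra.
  assert (Hprod : A * (c * E) <= A * (c * (Rpower l (- k) * exp (nu * l))))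
    by (apply Rmult_le_compat_l; [lra |]; apply Rmult_le_compat_l; lra).
  pose proof (exp_pos (nu * l)).
  assert (HW : 0 < A * exp (nu * l)) by nra.
  apply (Rmult_le_reg_r (8 * (A * exp (nu * l)))); [lra |].
  replace (3 / (A * exp (nu * l)) * (8 * (A * exp (nu * l)))) with 24 by (field; lra).
  lra.
Qed.

Section Power_tails.

Variables Gp Gm : R -> R.
Hypothesis Hllr : llr_pair Gp Gm.
Hypothesis Hunb : unbounded_signals Gp Gm.
Variables c k x0 : R.
Hypothesis Hc : 0 < c.
Hypothesis Hk : 0 < k.
Hypothesis Hx0 : 0 < x0.
Hypothesis Htail : forall x, x0 < x ->
  Gm (- x) = c * Rpower x (- k) /\ Gp x = 1 - c * Rpower x (- k).

Lemma drift_le_right_tail mu l : 0 <= mu <= / 4 -> 12 <= l -> x0 < l ->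
  drift mu (Gp (- l)) (Gm (- l)) <= 1 - c * Rpower l (- k) / 8.
Proof.
  intros Hmu Hl12 Hlx0. destruct (Htail l Hlx0) as [Em _]. rewrite <- Em.
  pose proof (Gp_pos Gp Gm Hllr Hunb (- l)). pose proof (Gp_lt_1 Gp Gm Hllr Hunb (- l)).
  pose proof (Gm_pos Gp Gm Hllr Hunb (- l)). pose proof (Gm_lt_1 Gp Gm Hllr Hunb (- l)).
  apply drift_le_of_ln_ratio with l; [lra | lra | lra | lra |].
  assert (Hratio : Gp (- l) / Gm (- l) <= exp (- l)).
  { pose proof (Gp_le_exp_Gm Gp Gm Hllr Hunb (- l)).
    apply (Rmult_le_reg_r (Gm (- l))); [lra |]. field_simplify; lra. }
  apply ln_le_compat in Hratio; [| apply Rdiv_lt_0_compat; lra].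
  rewrite ln_exp in Hratio. exact Hratio.
Qed.

Lemma drift_le_left_tail mu l : 0 <= mu <= / 4 -> l <= -12 -> l < - x0 ->
  drift mu (Gp (- l)) (Gm (- l)) <= 1 - c * Rpower (- l) (- k) / 8.
Proof.
  intros Hmu Hl12 Hlx0. destruct (Htail (- l) ltac:(lra)) as [_ Ep].
  replace (c * Rpower (- l) (- k)) with (1 - Gp (- l)) by (rewrite Ep; ring).
  pose proof (Gp_pos Gp Gm Hllr Hunb (- l)). pose proof (Gp_lt_1 Gp Gm Hllr Hunb (- l)).
  pose proof (Gm_pos Gp Gm Hllr Hunb (- l)). pose proof (Gm_lt_1 Gp Gm Hllr Hunb (- l)).
  rewrite drift_sym. apply drift_le_of_ln_ratio with (- l); [lra | lra | lra | lra |].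
  assert (Hratio : (1 - Gm (- l)) / (1 - Gp (- l)) <= exp (- - l)).
  { pose proof (one_sub_Gm_le Gp Gm Hllr Hunb (- l)).
    apply (Rmult_le_reg_r (1 - Gp (- l))); [lra |]. field_simplify; lra. }
  apply ln_le_compat in Hratio; [| apply Rdiv_lt_0_compat; lra].
  rewrite ln_exp in Hratio. exact Hratio.
Qed.

Let L0 := x0 + 12.
Let gap := (1 - exp (-1)) * (c * Rpower (L0 + 1) (- k)).
Let B := - ln (1 - Gm L0) - ln (Gp (- L0)).

Lemma gap_le_center l : - L0 <= l <= L0 -> gap <= Gm (- l) - Gp (- l).
Proof.
  intros Hl. unfold gap.
  assert (exp (-1) < 1) by (rewrite <- exp_0; apply exp_increasing; lra).
  destruct (Rle_dec 0 l) as [Hpos | Hneg].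
  - destruct (Htail (L0 + 1)) as [Em _]; [unfold L0; lra |]. rewrite <- Em.
    pose proof (Gm_sub_Gp_ge_left Gp Gm Hllr Hunb (- l) ltac:(lra)).
    pose proof (Gm_mono Gp Gm Hllr (- (L0 + 1)) (- l - 1) ltac:(lra)). nra.
  - destruct (Htail (L0 + 1)) as [_ Ep]; [unfold L0; lra |].
    replace (c * Rpower (L0 + 1) (- k)) with (1 - Gp (L0 + 1)) by (rewrite Ep; ring).
    pose proof (Gm_sub_Gp_ge_right Gp Gm Hllr Hunb (- l) ltac:(lra)).
    pose proof (Gp_mono Gp Gm Hllr (- l + 1) (L0 + 1) ltac:(lra)). nra.
Qed.

Lemma gap_pos : 0 < gap.
Proof.
  unfold gap. assert (exp (-1) < 1) by (rewrite <- exp_0; apply exp_increasing; lra).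
  apply Rmult_lt_0_compat; [lra | apply Rmult_lt_0_compat; [exact Hc | apply exp_pos]].
Qed.

Lemma drift_le_center mu l : 0 <= mu -> mu * B <= gap ^ 2 / 32 -> - L0 <= l <= L0 ->
  drift mu (Gp (- l)) (Gm (- l)) <= 1 - gap ^ 2 / 16.
Proof.
  intros Hmu HmuB Hl.
  pose proof (Gp_pos Gp Gm Hllr Hunb (- l)). pose proof (Gp_lt_1 Gp Gm Hllr Hunb (- l)).
  pose proof (Gm_pos Gp Gm Hllr Hunb (- l)). pose proof (Gm_lt_1 Gp Gm Hllr Hunb (- l)).
  pose proof (Gp_pos Gp Gm Hllr Hunb (- L0)). pose proof (Gp_lt_1 Gp Gm Hllr Hunb (- L0)).
  pose proof (Gm_pos Gp Gm Hllr Hunb L0). pose proof (Gm_lt_1 Gp Gm Hllr Hunb L0).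
  assert (ln (1 - Gm L0) <= 0) by (apply ln_nonpos; lra).
  assert (ln (Gp (- L0)) <= 0) by (apply ln_nonpos; lra).
  assert (ln (1 - Gm L0) <= ln (1 - Gm (- l))).
  { apply ln_le_compat; [lra |]. pose proof (Gm_mono Gp Gm Hllr (- l) L0 ltac:(lra)). lra. }
  assert (ln (Gp (- L0)) <= ln (Gp (- l)))
    by (apply ln_le_compat; [lra | apply (Gp_mono Gp Gm Hllr); lra]).
  pose proof (gap_le_center l Hl). pose proof gap_pos.
  apply drift_le_of_gap with B;
    [lra | lra | lra | lra | unfold B; lra | unfold B; lra | exact HmuB].
Qed.

Lemma B_nonneg : 0 <= B.
Proof.
  pose proof (Gp_pos Gp Gm Hllr Hunb (- L0)). pose proof (Gp_lt_1 Gp Gm Hllr Hunb (- L0)).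
  pose proof (Gm_pos Gp Gm Hllr Hunb L0). pose proof (Gm_lt_1 Gp Gm Hllr Hunb L0).
  assert (ln (1 - Gm L0) <= 0) by (apply ln_nonpos; lra).
  assert (ln (Gp (- L0)) <= 0) by (apply ln_nonpos; lra).
  unfold B; lra.
Qed.

Lemma gap_le_1 : gap <= 1.
Proof.
  pose proof (gap_le_center 0 ltac:(unfold L0; lra)).
  pose proof (Gp_pos Gp Gm Hllr Hunb (- 0)). pose proof (Gm_lt_1 Gp Gm Hllr Hunb (- 0)). lra.
Qed.

Lemma drift_le_center_weighted nu A l : 0 < nu -> 3 * nu * B <= gap ^ 2 / 32 ->
  48 / gap ^ 2 <= A -> Rabs l <= L0 ->
  drift (3 * nu) (Gp (- l)) (Gm (- l)) <= 1 - 3 / (A * exp (nu * Rabs l)).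
Proof.
  intros Hnu HnuB HA Hl.
  assert (Hl' : - L0 <= l <= L0) by (unfold Rabs in Hl; destruct (Rcase_abs l); lra).
  apply Rle_trans with (1 - gap ^ 2 / 16); [apply drift_le_center; lra |].
  pose proof gap_pos.
  assert (Hg2 : 0 < gap ^ 2) by (apply pow_lt; lra).
  assert (H48 : 0 < 48 / gap ^ 2) by (apply Rdiv_lt_0_compat; lra).
  assert (1 <= exp (nu * Rabs l))
    by (rewrite <- exp_0; apply exp_le_compat; pose proof (Rabs_pos l); nra).
  assert (/ (A * exp (nu * Rabs l)) <= / (48 / gap ^ 2))
    by (apply Rinv_le_contravar; [exact H48 | nra]).
  replace (gap ^ 2 / 16) with (3 * / (48 / gap ^ 2)) by (field; lra).
  unfold Rdiv. lra.
Qed.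

Lemma drift_le_tail_weighted nu A l : 0 < nu -> 3 * nu <= / 4 ->
  24 / (c * exp (k * ln (nu / k))) <= A -> L0 < Rabs l ->
  drift (3 * nu) (Gp (- l)) (Gm (- l)) <= 1 - 3 / (A * exp (nu * Rabs l)).
Proof.
  intros Hnu Hmu HA Hl. unfold L0 in Hl.
  destruct (Rle_dec 0 l) as [Hpos | Hneg].
  - rewrite Rabs_right in * by lra.
    apply Rle_trans with (1 - c * Rpower l (- k) / 8); [apply drift_le_right_tail; lra |].
    pose proof (three_div_le_Rpower_tail c k nu A l Hc Hk Hnu ltac:(lra) HA). lra.
  - rewrite Rabs_left in * by lra.
    apply Rle_trans with (1 - c * Rpower (- l) (- k) / 8); [apply drift_le_left_tail; lra |].
    pose proof (three_div_le_Rpower_tail c k nu A (- l) Hc Hk Hnu ltac:(lra) HA). lra.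
Qed.

Lemma drift_uniform_bound : exists nu A, 0 < nu /\ 1 <= A /\
  forall l, drift (3 * nu) (Gp (- l)) (Gm (- l)) <= 1 - 3 / (A * exp (nu * Rabs l)).
Proof.
  pose proof gap_pos. pose proof gap_le_1. pose proof B_nonneg.
  assert (Hg2 : 0 < gap ^ 2) by (apply pow_lt; lra).
  assert (Hg2' : gap ^ 2 <= 1) by (rewrite <- (pow1 2); apply pow_incr; lra).
  set (nu := gap ^ 2 / 96 / (B + 1)).
  assert (Hnu : 0 < nu) by (unfold nu; apply Rdiv_lt_0_compat; lra).
  assert (HnuB : 3 * nu * (B + 1) = gap ^ 2 / 32) by (unfold nu; field; lra).
  set (A := Rmax (48 / gap ^ 2) (24 / (c * exp (k * ln (nu / k))))).
  assert (HA1 : 48 <= A).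
  { apply Rle_trans with (48 / gap ^ 2); [| apply Rmax_l].
    apply (Rmult_le_reg_r (gap ^ 2)); [lra |]. field_simplify; nra. }
  exists nu, A. split; [exact Hnu | split; [lra |]].
  intro l. destruct (Rle_dec (Rabs l) L0).
  - apply drift_le_center_weighted; [exact Hnu | lra | apply Rmax_l | assumption].
  - apply drift_le_tail_weighted; [exact Hnu | nra | apply Rmax_r | lra].
Qed.

End Power_tails.

Lemma cube_lt_Rpower A t : 0 <= A -> 1 <= t ->
  (A / t) ^ 3 < (A ^ 3 + 1) * Rpower t (- (21 / 10)).
Proof.
  intros HA Ht.
  assert (Hpow : / t ^ 3 <= Rpower t (- (21 / 10))).
  { rewrite <- Rpower_pow, <- Rpower_Ropp by lra. apply Rle_Rpower; [lra |]. simpl. lra. }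
  assert (Ht3 : 0 < / t ^ 3) by (apply Rinv_0_lt_compat, pow_lt; lra).
  pose proof (pow_le A 3 HA).
  replace ((A / t) ^ 3) with (A ^ 3 * / t ^ 3) by (field; lra).
  apply Rlt_le_trans with ((A ^ 3 + 1) * / t ^ 3); [nra |].
  apply Rmult_le_compat_l; lra.
Qed.

Theorem proposition2 (Gp Gm : R -> R) :
  llr_pair Gp Gm ->
  unbounded_signals Gp Gm ->
  (exists c k x0, 0 < c /\ 0 < k /\ 0 < x0 /\
     forall x, x0 < x ->
       Gm (- x) = c * Rpower x (- k) /\ Gp x = 1 - c * Rpower x (- k)) ->
  exists kappa, 0 < kappa /\
    forall t : nat, (1 <= t)%nat ->
      prob_wrong Gp Gm t < kappa * Rpower (INR t) (- (21 / 10)).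
Proof.
  intros Hllr Hunb [c [k [x0 [Hc [Hk [Hx0 Htail]]]]]].
  destruct (drift_uniform_bound Gp Gm Hllr Hunb c k x0 Hc Hk Hx0 Htail)
    as [nu [A [Hnu [HA Hdrift]]]].
  exists (A ^ 3 + 1). split; [pose proof (pow_le A 3 ltac:(lra)); lra |].
  intros t Ht. unfold prob_wrong.
  pose proof (prob_minus_from_le_cube Gp Gm Hllr Hunb nu A Hnu HA Hdrift (t - 1) 0) as Hbound.
  replace (S (t - 1)) with t in Hbound by lia.
  rewrite weight_at_0, Rmult_1_r in Hbound.
  eapply Rle_lt_trans; [exact Hbound |].
  apply cube_lt_Rpower; [lra | apply (le_INR 1); exact Ht].
Qed.
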